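(* For every integer $m\ge1$ and all integers $a,b\ge 1$, $$M\big(\mathcal G(m,a)\,\mathcal G(m,-b)\big)=M\big(\mathcal G(m,a-1)\,\mathcal G(m,-(b-1))\big),$$ and $M\big(\mathcal G(m,-a)\,\mathcal G(m,-b)\big)=M\big(\mathcal G(m,-(a+b))\big)$ for all integers $a,b\ge 0$. (Here $\mathcal G(m,0)$ for the factor with $a-1=0$ is interpreted via the same definition as for $n\le 0$.)
   Context: Grid conventions: an $m$-by-$N$ grid has vertices $(i,j)$, $1\le i\le m$ (rows), $1\le j\le N$ (columns); horizontal edges join $(i,j),(i,j+1)$, vertical edges join $(i,j),(i+1,j)$. A signed graph is a graph each of whose edges carries a sign $+1$ or $-1$ (parallel edges allowed). For a signed graph $\mathcal G$, $M(\mathcal G)$ denotes the sum over all perfect matchings of $\mathcal G$ of the product of the signs of the edges in the matching. For $m\ge1$ and $n\ge 1$, $\mathcal G(m,n)$ is the $m$-by-$n$ grid graph with all edges of sign $+1$. For $n\le 0$, $\mathcal G(m,n)$ has the vertex set of the $m$-by-$(2-n)$ grid, all horizontal edges of that grid with sign $+1$, the vertical edges lying in columns $2,3,\dots,1-n$ with sign $-1$, and no vertical edges in columns $1$ and $2-n$. For signed graphs $\mathcal G_1,\mathcal G_2$ whose vertex sets are those of $m$-row grids, the adjoined graph $\mathcal G_1\mathcal G_2$ is obtained by placing $\mathcal G_1$ to the left of $\mathcal G_2$ and joining, for each row $i$, the rightmost vertex of row $i$ of $\mathcal G_1$ to the leftmost vertex of row $i$ of $\mathcal G_2$ by an edge of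 sign $+1$. *)

From mathcomp Require Import all_boot all_order all_algebra.
Set Implicit Arguments. Unset Strict Implicit. Unset Printing Implicit Defensive.
Import Order.TTheory GRing.Theory Num.Theory.
Local Open Scope ring_scope.

(* A vertex (i,j) : row i, column j, both 1-indexed as in the paper. *)
Definition vertex := (nat * nat)%type.
(* A signed edge: two endpoints and a sign in {+1,-1} (as an int). *)
Definition sedge := (vertex * vertex * int)%type.

(* A signed graph whose vertex set is that of the m-by-N grid; the edge list
   may contain parallel edges. *)
Record sgraph := SGraph { nrows : nat; ncols : nat; edges : seq sedge }.

Definition grid_vertices (G : sgraph) : seq vertex :=
  [seq (i, j) | i <- iota 1 (nrows G), j <- iota 1 (ncols G)].

Definition dflt_edge : sedge := ((0%N, 0%N), (0%N, 0%N), 0).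

Definition incident (e : sedge) (v : vertex) : bool :=
  (v == e.1.1) || (v == e.1.2).

Definition perfect_matching (G : sgraph) (S : {set 'I_(size (edges G))}) : bool :=
  all (fun v => #|[set k in S | incident (nth dflt_edge (edges G) k) v]| == 1%N)
      (grid_vertices G).

Definition Msum (G : sgraph) : int :=
  \sum_(S : {set 'I_(size (edges G))} | perfect_matching S)
     \prod_(k in S) (nth dflt_edge (edges G) k).2.

Definition hedges (m N : nat) : seq sedge :=
  [seq ((i, j), (i, j.+1), 1) | i <- iota 1 m, j <- iota 1 N.-1].

Definition vedges (m : nat) (cols : seq nat) (s : int) : seq sedge :=
  [seq ((i, j), (i.+1, j), s) | i <- iota 1 m.-1, j <- cols].

Definition gridG (m : nat) (n : int) : sgraph :=
  if (0 < n) then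
    SGraph m `|n|%N (hedges m `|n|%N ++ vedges m (iota 1 `|n|%N) 1)
  else
    (* n <= 0 : 2 - n = 2 + |n| columns, vertical edges (sign -1) in columns
       2, ..., 1 - n = 1 + |n| *)
    SGraph m (2 + `|n|)%N (hedges m (2 + `|n|)%N ++ vedges m (iota 2 `|n|%N) (-1)).

Definition shift_edge (d : nat) (e : sedge) : sedge :=
  (((e.1.1.1, e.1.1.2 + d)%N, (e.1.2.1, e.1.2.2 + d)%N), e.2).

Definition adjoin (G1 G2 : sgraph) : sgraph :=
  SGraph (nrows G1) (ncols G1 + ncols G2)%N
    (edges G1 ++ map (shift_edge (ncols G1)) (edges G2)
      ++ [seq ((i, ncols G1), (i, (ncols G1).+1), 1) | i <- iota 1 (nrows G1)]).

From mathcomp Require Import all_boot all_order all_algebra.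
From mathcomp Require Import zify.
Import Order.TTheory GRing.Theory Num.Theory.
Local Open Scope ring_scope.
Set Implicit Arguments. Unset Strict Implicit. Unset Printing Implicit Defensive.

(* Read a grid-like graph column by column: a column is [Bare] (no vertical edges), [Pos]
   or [Neg] (vertical edges of sign +1 or -1), and consecutive columns are joined by m rungs
   of sign +1.  Recording which rungs between two columns a perfect matching uses (a bit
   sequence) writes M of the graph as a product of 2^m x 2^m transfer matrices, one per
   column.  The matrix J of a bare column sends a state to its complement, so J J = 1, and
   the matrices P, N of the signed columns satisfy P J N = J.  Now G(m,a) G(m,-b) has word
   P^a J N^b J, and cancelling one factor P J N leaves the word of G(m,a-1) G(m,-(b-1))
   (G(m,0) has word J J); G(m,-a) G(m,-b) has word J N^a J J N^b J = J N^(a+b) J, the word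
   of G(m,-(a+b)). *)

(** * Sums over subsequences *)

Fixpoint bitseqs n : seq bitseq :=
  if n is n'.+1 then [seq true :: b | b <- bitseqs n'] ++ [seq false :: b | b <- bitseqs n']
  else [:: [::]].

Lemma mem_map_cons (T : eqType) (x y : T) (s : seq T) (A : seq (seq T)) :
  (x :: s \in map (cons y) A) = (x == y) && (s \in A).
Proof.
elim: A => [|z A IH] /=; first by rewrite andbF.
by rewrite !inE IH eqseq_cons andb_orr.
Qed.

Lemma count_pred0_in (T : eqType) (a : pred T) (s : seq T) :
  {in s, forall x, ~~ a x} -> count a s = 0%N.
Proof. by move=> a0; apply/eqP; rewrite -leqn0 leqNgt -has_count; apply/hasPn. Qed.

Lemma mem_bitseqs n bs : (bs \in bitseqs n) = (size bs == n).
Proof.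
elim: n bs => [|n IH] [|b bs] /=; rewrite ?mem_cat ?mem_map_cons ?IH ?eqSS //.
- by apply/negbTE/negP => /orP[] /mapP[].
- by case: b; rewrite ?orbF.
Qed.

Lemma uniq_bitseqs n : uniq (bitseqs n).
Proof.
elim: n => //= n IH; rewrite cat_uniq.
have inj b : injective (cons b : bitseq -> bitseq) by move=> x y [].
rewrite !map_inj_uniq ?IH //= andbT.
by apply/hasPn => x /mapP[y _ ->]; rewrite mem_map_cons.
Qed.

Definition bits n (S : {set 'I_n}) : bitseq := [seq k \in S | k <- enum 'I_n].

Lemma nth_bits n (S : {set 'I_n}) (k : 'I_n) : nth false (bits S) k = (k \in S).
Proof. by rewrite (nth_map k) ?size_enum_ord ?nth_ord_enum. Qed.

Lemma size_bits n (S : {set 'I_n}) : size (bits S) = n.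
Proof. by rewrite size_map size_enum_ord. Qed.

Lemma mask_bits (T : Type) (x0 : T) (s : seq T) (S : {set 'I_(size s)}) :
  mask (bits S) s = [seq nth x0 s k | k : 'I_(size s) <- enum S].
Proof.
have -> : enum S = mask (bits S) (enum 'I_(size s)) by rewrite -filter_mask enumT.
by rewrite map_mask (map_comp (nth x0 s) val) val_enum_ord -/(mkseq _ _) mkseq_nth.
Qed.

Section BitseqSums.
Variable R : nmodType.
Implicit Type f : bitseq -> R.

Lemma big_bitseqs0 f : \sum_(Y <- bitseqs 0) f Y = f [::].
Proof. by rewrite big_seq1. Qed.

Lemma big_bitseqsS n f :
  \sum_(Y <- bitseqs n.+1) f Y =
  \sum_(Y <- bitseqs n) f (true :: Y) + \sum_(Y <- bitseqs n) f (false :: Y).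
Proof. by rewrite big_cat !big_map. Qed.

Lemma big_bitseqs_pick n f (Y0 : bitseq) : size Y0 = n ->
  (forall Y, size Y = n -> Y != Y0 -> f Y = 0) -> \sum_(Y <- bitseqs n) f Y = f Y0.
Proof.
move=> HY0 Hf; have Y0in : Y0 \in bitseqs n by rewrite mem_bitseqs HY0.
rewrite (bigD1_seq _ Y0in (uniq_bitseqs n)) /= big_seq_cond big1 ?addr0 //.
by move=> Y /andP[]; rewrite mem_bitseqs => /eqP; apply: Hf.
Qed.

Lemma big_sets_bitseqs n f :
  \sum_(S : {set 'I_n}) f (bits S) = \sum_(bs <- bitseqs n) f bs.
Proof.
rewrite -big_enum -(big_map (@bits n) xpredT f); apply: perm_big.
apply: uniq_perm; rewrite ?uniq_bitseqs //.
  rewrite map_inj_uniq ?enum_uniq // => S1 S2 E.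
  by apply/setP => k; rewrite -!nth_bits E.
move=> bs; rewrite mem_bitseqs; apply/mapP/eqP => [[S _ ->]|Hs].
  exact: size_bits.
exists [set k : 'I_n | nth false bs k]; first by rewrite mem_enum.
apply: (@eq_from_nth _ false); first by rewrite size_bits Hs.
by move=> i; rewrite Hs => Hi; rewrite (nth_bits _ (Ordinal Hi)) inE.
Qed.

End BitseqSums.

Section SubseqSum.
Variables (T : eqType) (R : pzRingType).
Implicit Types (s l : seq T) (F G : seq T -> R).

Fixpoint subsum s F : R :=
  if s is x :: s' then subsum s' (fun l => F (x :: l)) + subsum s' F else F [::].

Lemma subsum_cons x s F : subsum (x :: s) F = subsum s (fun l => F (x :: l)) + subsum s F.
Proof. by []. Qed.

Lemma subsumE s F : subsum s F = \sum_(bs <- bitseqs (size s)) F (mask bs s).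
Proof.
elim: s F => [|x s IH] F /=; first by rewrite big_bitseqs0.
by rewrite big_cat !big_map !IH.
Qed.

Lemma eq_in_subsum s F G : (forall l, subseq l s -> F l = G l) -> subsum s F = subsum s G.
Proof.
elim: s F G => [|x s IH] F G eqFG /=; first exact: eqFG.
congr (_ + _); apply: IH => l sub_l_s; apply: eqFG; first by rewrite /= eqxx.
exact: subseq_trans sub_l_s (subseq_cons s x).
Qed.

Lemma eq_subsum s F G : F =1 G -> subsum s F = subsum s G.
Proof. by move=> eqFG; apply: eq_in_subsum => l _; apply: eqFG. Qed.

Lemma subsum_cat s1 s2 F :
  subsum (s1 ++ s2) F = subsum s1 (fun l1 => subsum s2 (fun l2 => F (l1 ++ l2))).
Proof. by elim: s1 F => [|x s1 IH] F //=; rewrite !IH. Qed.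

Lemma subsumD s F G : subsum s (fun l => F l + G l) = subsum s F + subsum s G.
Proof.
elim: s F G => [|x s IH] F G //=.
by rewrite (IH (fun l => F (x :: l))) IH addrACA.
Qed.

Lemma subsumMl s F k : subsum s (fun l => k * F l) = k * subsum s F.
Proof. by elim: s F => [|x s IH] F //=; rewrite (IH (fun l => F (x :: l))) IH mulrDr. Qed.

Lemma subsumMr s F k : subsum s (fun l => F l * k) = subsum s F * k.
Proof. by elim: s F => [|x s IH] F //=; rewrite (IH (fun l => F (x :: l))) IH mulrDl. Qed.

Lemma subsum_sum (I : Type) (r : seq I) s (F : I -> seq T -> R) :
  subsum s (fun l => \sum_(i <- r) F i l) = \sum_(i <- r) subsum s (F i).
Proof.
elim: r => [|i r IH].
  rewrite big_nil (@eq_subsum _ _ (fun=> 0)) => [|l]; last by rewrite big_nil.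
  by elim: s => //= x s ->; rewrite addr0.
by rewrite big_cons -IH -subsumD; apply: eq_subsum => l; rewrite big_cons.
Qed.

Definition perm_invariant F := forall l l', perm_eq l l' -> F l = F l'.

Lemma perm_subsum s s' F : perm_invariant F -> perm_eq s s' -> subsum s F = subsum s' F.
Proof.
elim: s s' F => [|x s IH] s' F F_inv eq_s_s'.
  by move: (perm_size eq_s_s'); case: s' eq_s_s'.
have x_in_s' : x \in s' by rewrite -(perm_mem eq_s_s') mem_head.
case/splitPr: x_in_s' eq_s_s' => l1 l2 eq_s_l.
have eq_s : perm_eq s (l1 ++ l2).
  by rewrite -(perm_cons x) (perm_trans eq_s_l) // -cat1s perm_catCA.
rewrite /= (IH _ _ _ eq_s) ?(IH _ _ F_inv eq_s); last first.
  by move=> l l' eq_l; apply: F_inv; rewrite perm_cons.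
rewrite !subsum_cat -subsumD; apply: eq_subsum => l1' /=.
congr (_ + _); apply: eq_subsum => l2'.
by apply: F_inv; rewrite -cat1s perm_catCA.
Qed.

End SubseqSum.

Definition cover_weight (V : seq vertex) (occ : vertex -> nat) (l : seq sedge) : int :=
  if all (fun v => count (incident^~ v) l + occ v == 1)%N V then \prod_(e <- l) e.2 else 0.

Lemma perm_cover_weight V occ : perm_invariant (cover_weight V occ).
Proof.
move=> l l' eq_l; rewrite /cover_weight (perm_big _ eq_l).
by under eq_all do rewrite (permP eq_l).
Qed.

Lemma card_set_count n (S : {set 'I_n}) (a : pred 'I_n) :
  #|[set k in S | a k]| = count a (enum S).
Proof.
rewrite -size_filter; have /card_uniqP <- : uniq (filter a (enum S)).
  by rewrite filter_uniq ?enum_uniq.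
by apply: eq_card => k; rewrite !inE mem_filter mem_enum andbC.
Qed.

Lemma Msum_subsum G : Msum G = subsum (edges G) (cover_weight (grid_vertices G) (fun=> 0%N)).
Proof.
rewrite /Msum big_mkcond /= subsumE -big_sets_bitseqs; apply: eq_bigr => S _.
rewrite (mask_bits dflt_edge) /cover_weight /perfect_matching big_map big_enum /=.
by congr (if _ then _ else _); apply: eq_all => v; rewrite card_set_count count_map addn0.
Qed.

(** * Transfer matrices *)

(* Signed number of tilings by vertical dominoes of sign [s] of the vertices of a column
   path that are not yet covered, when the i-th vertex from the top already carries
   [nth 0 E i] horizontal edges. *)
Fixpoint column_weight (s : int) (E : seq nat) : int :=
  match E with
  | [::] => 1
  | 1%N :: E' => column_weight s E'
  | 0%N :: 0%N :: E' => s * column_weight s E'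
  | _ => 0
  end.

Fixpoint occupancy (S Y : bitseq) : seq nat :=
  if (S, Y) is (a :: S', y :: Y') then (a + y)%N :: occupancy S' Y' else [::].

Lemma column_weight0 E : column_weight 0 E = all (eq_op^~ 1%N) E.
Proof. by elim: E => [|[|[|n]] [|[|e] E] IH] //=; rewrite mul0r. Qed.

Lemma all_occupancy1 (S Y : bitseq) : size S = size Y ->
  all (eq_op^~ 1%N) (occupancy S Y) = (Y == map negb S).
Proof.
elim: S Y => [|a S IH] [|y Y] //= [eq_size].
by rewrite eqseq_cons IH //; case: a; case: y.
Qed.

Lemma size_occupancy (S Y : bitseq) : size S = size Y -> size (occupancy S Y) = size S.
Proof. by elim: S Y => [|a S IH] [|y Y] //= [/IH ->]. Qed.

Lemma nth_occupancy (S Y : bitseq) j : size S = size Y ->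
  nth 0 (occupancy S Y) j = (nth false S j + nth false Y j)%N.
Proof.
elim: S Y j => [|a S IH] [|y Y] [|j] //= [eq_size]; rewrite ?nth_nil //.
exact: IH.
Qed.

Inductive column := Bare | Pos | Neg.

(* A bare column behaves like one whose vertical edges have sign 0. *)
Definition column_sign (t : column) : int :=
  match t with Bare => 0 | Pos => 1 | Neg => -1 end.

Definition transfer (t : column) (S Y : bitseq) : int :=
  column_weight (column_sign t) (occupancy S Y).

Fixpoint transfer_prod m (w : seq column) (S : bitseq) : int :=
  if w is t :: w' then \sum_(Y <- bitseqs m) transfer t S Y * transfer_prod m w' Y
  else (S == nseq m false)%:Z.

Lemma transfer_Bare (S Y : bitseq) : size S = size Y ->
  transfer Bare S Y = (Y == map negb S)%:Z.
Proof. by move=> eq_size; rewrite /transfer column_weight0 all_occupancy1. Qed.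

(* Induction on the rows: when the top vertex is free on both sides of the bare column,
   a top domino on the + side cancels a top domino on the - side. *)
Lemma transfer_Pos_Neg m (S Z : bitseq) : size S = m -> size Z = m ->
  \sum_(Y <- bitseqs m) transfer Pos S Y * transfer Neg (map negb Y) Z = (Z == map negb S)%:Z.
Proof.
rewrite /transfer /=.
elim: m S Z => [|m IH] [|a S] [|z Z] //= HS HZ; first by rewrite big_bitseqs0.
case: HS HZ => HS [HZ]; rewrite big_bitseqsS -big_split eqseq_cons.
case: a; case: z => /=.
- by rewrite big1 // => Y _ /=; rewrite mul0r mulr0 addr0.
- by rewrite -IH //; apply: eq_bigr => Y _ /=; rewrite mul0r add0r.
- by rewrite -IH //; apply: eq_bigr => Y _ /=; rewrite mulr0 addr0.
case: m {IH} S Z HS HZ => [|m] [|a S] [|z Z] //= _ _.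
  by rewrite big_bitseqs0 /= mulr0 mul0r addr0.
rewrite big_bitseqsS -big_split big1 // => Y _ /=.
by case: a; case: z; rewrite /= ?(mul0r, mulr0, add0r, addr0) // mulN1r mul1r mulrN addNr.
Qed.

Section TransferProd.
Variable m : nat.
Implicit Types (w : seq column) (S : bitseq).

Lemma transfer_prod_Bare w S : size S = m ->
  transfer_prod m (Bare :: w) S = transfer_prod m w (map negb S).
Proof.
move=> HS; rewrite /= (big_bitseqs_pick _ (Y0 := map negb S)) ?size_map //.
  by rewrite transfer_Bare ?size_map ?HS // eqxx mul1r.
by move=> Y HY /negbTE neqY; rewrite transfer_Bare ?HS ?HY // neqY mul0r.
Qed.

Lemma transfer_prod_Bare_Bare w S : size S = m ->
  transfer_prod m [:: Bare, Bare & w] S = transfer_prod m w S.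
Proof.
by move=> HS; rewrite !transfer_prod_Bare ?size_map // (mapK negbK).
Qed.

Lemma transfer_prod_Pos_Bare_Neg w S : size S = m ->
  transfer_prod m [:: Pos, Bare, Neg & w] S = transfer_prod m (Bare :: w) S.
Proof.
move=> HS; rewrite transfer_prod_Bare //.
transitivity (\sum_(Y <- bitseqs m) \sum_(Z <- bitseqs m)
    transfer Pos S Y * transfer Neg (map negb Y) Z * transfer_prod m w Z).
  transitivity
    (\sum_(Y <- bitseqs m) transfer Pos S Y * transfer_prod m [:: Bare, Neg & w] Y) => //.
  rewrite !big_seq; apply: eq_bigr => Y; rewrite mem_bitseqs => /eqP HY.
  by rewrite transfer_prod_Bare //= big_distrr; apply: eq_bigr => Z _; apply: mulrA.
rewrite exchange_big /= !big_seq (eq_bigr (fun Z => (Z == map negb S)%:Z * transfer_prod m w Z)).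
  rewrite -big_seq (big_bitseqs_pick _ (Y0 := map negb S)) ?size_map ?eqxx ?mul1r //.
  by move=> Z _ /negbTE ->; rewrite mul0r.
by move=> Z; rewrite mem_bitseqs => /eqP HZ; rewrite -big_distrl /= transfer_Pos_Neg.
Qed.

Lemma transfer_prod_catl w1 w w' :
  (forall S, size S = m -> transfer_prod m w S = transfer_prod m w' S) ->
  forall S, size S = m -> transfer_prod m (w1 ++ w) S = transfer_prod m (w1 ++ w') S.
Proof.
move=> eq_w; elim: w1 => [|t w1 IH] S HS /=; first exact: eq_w.
rewrite !big_seq; apply: eq_bigr => Y; rewrite mem_bitseqs => /eqP HY.
by rewrite IH.
Qed.

End TransferProd.

(** * Vertical paths *)

Definition vpath r k c (s : int) : seq sedge :=
  [seq ((i, c), (i.+1, c), s) | i <- iota r k.-1].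

Definition vcover_weight r c (E : seq nat) (l : seq sedge) : int :=
  if all (fun j => count (incident^~ (r + j, c)) l + nth 0 E j == 1)%N (iota 0 (size E))
  then \prod_(e <- l) e.2 else 0.

Definition bump_head (E : seq nat) := if E is x :: E' then x.+1 :: E' else [::].

Lemma all_iota0S (P : pred nat) n :
  all P (iota 0 n.+1) = P 0%N && all (fun j => P j.+1) (iota 0 n).
Proof. by rewrite /= (iotaDl 1 0) all_map. Qed.

Section VerticalPath.
Variables (c : nat) (s : int).

Lemma count_vpath_above r k (l : seq sedge) : subseq l (vpath r.+1 k c s) ->
  count (incident^~ (r, c)) l = 0%N.
Proof.
move=> sub_l; apply: count_pred0_in => e /(mem_subseq sub_l) /mapP[i].
rewrite mem_iota => ir ->; rewrite /incident !xpair_eqE negb_or !negb_and.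
by apply/andP; split; apply/orP; left; apply/eqP; lia.
Qed.

Lemma vcover_weight_skip r e E (l : seq sedge) : subseq l (vpath r.+1 (size E) c s) ->
  vcover_weight r c (e :: E) l = (e == 1%N)%:Z * vcover_weight r.+1 c E l.
Proof.
move=> sub_l; rewrite /vcover_weight [size _]/= all_iota0S /= addn0 (count_vpath_above sub_l).
case: (e == 1%N); rewrite ?mul1r ?mul0r //.
by congr (if _ then _ else _); apply: eq_all => j; rewrite /= addSnnS.
Qed.

Lemma vcover_weight_domino r e E (l : seq sedge) : E != [::] ->
  subseq l (vpath r.+1 (size E) c s) ->
  vcover_weight r c (e :: E) (((r, c), (r.+1, c), s) :: l) =
  (if e == 0%N then s else 0) * vcover_weight r.+1 c (bump_head E) l.
Proof.
case: E => // x E _ sub_l; rewrite /vcover_weight [size _]/= [size (bump_head _)]/=.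
have inc_domino i : incident ((r, c), (r.+1, c), s) (i, c) = (i == r) || (i == r.+1).
  by rewrite /incident !xpair_eqE !eqxx !andbT.
rewrite !all_iota0S big_cons /= !addn0 addn1 (count_vpath_above sub_l) !inc_domino.
rewrite eqxx (gtn_eqF (ltnSn r)) eqxx /=.
have -> : all (fun j => (incident ((r, c), (r.+1, c), s) (r + j.+2, c)
              + count (incident^~ (r + j.+2, c)) l + nth 0 E j == 1)%N) (iota 0 (size E)) =
          all (fun j => count (incident^~ (r.+1 + j.+1, c)) l + nth 0 E j == 1)%N
            (iota 0 (size E)).
  apply: eq_all => j; rewrite inc_domino.
  have [-> ->] : (r + j.+2 == r) = false /\ (r + j.+2 == r.+1) = false.
    by split; apply/negbTE/eqP; lia.
  by rewrite addSnnS.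
rewrite !add1n addSn addnS eqSS.
by case: (e == 0%N); rewrite /= ?mul0r // [in RHS]fun_if mulr0.
Qed.

Lemma subsum_vpath k r (E : seq nat) : size E = k ->
  subsum (vpath r k c s) (vcover_weight r c E) = column_weight s E.
Proof.
elim: k r E => [|k IH] r [|e E] //= size_E; first by rewrite /vcover_weight big_nil.
have {}size_E : size E = k by case: size_E.
case: E size_E => [|e' E] size_E.
  by rewrite -size_E /vcover_weight /= big_nil add0n andbT; case: e => [|[|]].
rewrite -size_E (_ : vpath r _ c s = ((r, c), (r.+1, c), s) :: vpath r.+1 (size (e' :: E)) c s) //.
rewrite subsum_cons (eq_in_subsum (fun l => @vcover_weight_domino r e (e' :: E) l isT)).
rewrite (eq_in_subsum (fun l => @vcover_weight_skip r e (e' :: E) l)).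
rewrite !subsumMl size_E !IH -?size_E //.
case: e => [|[|e]] /=; rewrite ?mul0r ?mul1r ?addr0 ?add0r //.
by case: e' {size_E}; rewrite ?mulr0.
Qed.

End VerticalPath.

(** * Graphs of column words *)

Definition column_edges m c (t : column) : seq sedge :=
  if t is Bare then [::] else vpath 1 m c (column_sign t).

Lemma subsum_column_edges m c t (S Y : bitseq) : size S = m -> size Y = m ->
  subsum (column_edges m c t) (vcover_weight 1 c (occupancy S Y)) = transfer t S Y.
Proof.
move=> HS HY; have size_occ : size (occupancy S Y) = m by rewrite size_occupancy HS.
case: t; rewrite /= ?subsum_vpath //.
rewrite /transfer /= column_weight0 /vcover_weight big_nil.
by rewrite -[in RHS](mkseq_nth 0%N (occupancy S Y)) /mkseq all_map; case: all.
Qed.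

Definition hrungs c r k : seq sedge := [seq ((i, c), (i, c.+1), 1) | i <- iota r k].

Fixpoint word_edges m c (w : seq column) : seq sedge :=
  if w is t :: w' then
    column_edges m c t ++ (if w' is [::] then [::] else hrungs c 1 m) ++ word_edges m c.+1 w'
  else [::].

Fixpoint word_vertices m c (w : seq column) : seq vertex :=
  if w is _ :: w' then [seq (i, c) | i <- iota 1 m] ++ word_vertices m c.+1 w' else [::].

Definition left_occupancy c (S : bitseq) (v : vertex) : nat := (v.2 == c) && nth false S v.1.-1.

(* Signed perfect matchings of the graph of [w] drawn from column [c] on, in which the
   vertex in row i of column [c] is already covered from the left iff bit i-1 of [S] is. *)
Definition word_sum m c w (S : bitseq) : int :=
  subsum (word_edges m c w) (cover_weight (word_vertices m c w) (left_occupancy c S)).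

Lemma count_mask_hrungs c k r (Y : bitseq) i j :
  count (incident^~ (i, j)) (mask Y (hrungs c r k)) =
  [&& r <= i < r + k, (j == c) || (j == c.+1) & nth false Y (i - r)]%N.
Proof.
elim: k r Y => [|k IH] r Y.
  by rewrite mask0 addn0 ltnNge andbN.
case: Y => [|y Y]; first by rewrite /= nth_nil !andbF.
rewrite [hrungs _ _ _]/= mask_cons count_cat IH count_nseq /incident /= !xpair_eqE.
case: (ltngtP i r) => [_|ri|<-] /=; rewrite ?mul0n ?add0n //.
  by rewrite addSnnS (_ : i - r = (i - r.+1).+1)%N //; lia.
by rewrite subnn addn0 addnS ltnS leq_addr /=; case: (_ || _); case: y.
Qed.

Lemma mem_column_edges m c t e : e \in column_edges m c t -> (e.1.1.2 == c) && (e.1.2.2 == c).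
Proof. by case: t => //= /mapP[i _ ->]; rewrite !eqxx. Qed.

Lemma mem_word_edges m c w e : e \in word_edges m c w -> (c <= e.1.1.2)%N && (c <= e.1.2.2)%N.
Proof.
elim: w c => //= t w IH c; rewrite !mem_cat => /orP[/mem_column_edges|/orP[]].
- by case/andP => /eqP -> /eqP ->; rewrite leqnn.
- by case: w {IH} => // _ _ /mapP[i _ ->]; rewrite /= leqnn leqnSn.
- by move/IH => /andP[H1 H2]; rewrite !(ltnW H1) !(ltnW H2).
Qed.

Lemma mem_word_vertices m c w v :
  (v \in word_vertices m c w) = (1 <= v.1 <= m)%N && (c <= v.2 < c + size w)%N.
Proof.
case: v => i j /=; elim: w c => [|t w IH] c /=.
  by rewrite addn0 in_nil (ltnNge j c) andbN andbF.
rewrite mem_cat IH; apply/orP/andP => [[/mapP[k]|/andP[]]|[Hi Hj]].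
- by rewrite mem_iota => Hk [-> ->]; split; lia.
- by move=> Hi Hj; split; lia.
case: (ltngtP j c) => [|cj|jc]; first lia.
  by right; apply/andP; split; lia.
by left; apply/mapP; exists i; rewrite ?mem_iota ?jc //; lia.
Qed.

Section WordSubgraphs.
Variable m : nat.
Implicit Types (l : seq sedge) (S Y : bitseq).

Lemma count_word_edges_left c w l i j : subseq l (word_edges m c w) -> (j < c)%N ->
  count (incident^~ (i, j)) l = 0%N.
Proof.
move=> sub_l jc; apply: count_pred0_in => e /(mem_subseq sub_l) /mem_word_edges.
case: e => [[[a b] [a' b']] s] /= /andP[cb cb'].
by rewrite /incident /= !xpair_eqE negb_or !negb_and; apply/andP; split; apply/orP; right;
  apply/eqP; lia.
Qed.

Lemma count_column_edges_off c t l i j : subseq l (column_edges m c t) -> j != c ->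
  count (incident^~ (i, j)) l = 0%N.
Proof.
move=> sub_l jc; apply: count_pred0_in => e /(mem_subseq sub_l) /mem_column_edges.
case: e => [[[a b] [a' b']] s] /= /andP[/eqP -> /eqP ->].
by rewrite /incident /= !xpair_eqE (negbTE jc) !andbF.
Qed.

Lemma prod_mask_hrungs c r k Y : \prod_(e <- mask Y (hrungs c r k)) e.2 = 1.
Proof. by rewrite big_seq big1 // => e /mem_mask /mapP[i _ ->]. Qed.

Lemma cover_weight_split c t t' w S Y lv lr : size S = m -> size Y = m ->
  subseq lv (column_edges m c t) -> subseq lr (word_edges m c.+1 (t' :: w)) ->
  cover_weight (word_vertices m c [:: t, t' & w]) (left_occupancy c S)
    (lv ++ mask Y (hrungs c 1 m) ++ lr) =
  vcover_weight 1 c (occupancy S Y) lv *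
  cover_weight (word_vertices m c.+1 (t' :: w)) (left_occupancy c.+1 Y) lr.
Proof.
move=> HS HY sub_lv sub_lr; rewrite /cover_weight /vcover_weight size_occupancy HS ?HY //.
rewrite (_ : word_vertices _ _ _ =
  [seq (i, c) | i <- iota 1 m] ++ word_vertices m c.+1 (t' :: w)) //.
rewrite all_cat (iotaDl 1 0) !all_map !big_cat /= prod_mask_hrungs mul1r.
have -> : all (fun j => count (incident^~ (1 + j, c)) (lv ++ mask Y (hrungs c 1 m) ++ lr)
            + left_occupancy c S (1 + j, c) == 1)%N (iota 0 m) =
          all (fun j => count (incident^~ (1 + j, c)) lv + nth 0 (occupancy S Y) j == 1)%N
            (iota 0 m).
  apply: eq_in_all => j; rewrite mem_iota add0n => /andP[_ jm].
  rewrite !count_cat (count_word_edges_left _ sub_lr) // count_mask_hrungs nth_occupancy ?HS //.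
  by rewrite /left_occupancy /= eqxx ltn_add2l jm addn0 add1n subn1 /= addnAC addnA.
have -> : all (fun v => count (incident^~ v) (lv ++ mask Y (hrungs c 1 m) ++ lr)
            + left_occupancy c S v == 1)%N (word_vertices m c.+1 (t' :: w)) =
          all (fun v => count (incident^~ v) lr + left_occupancy c.+1 Y v == 1)%N
            (word_vertices m c.+1 (t' :: w)).
  apply: eq_in_all => -[i j]; rewrite mem_word_vertices /= => /andP[im /andP[cj _]].
  rewrite !count_cat (count_column_edges_off _ sub_lv); last by rewrite neq_ltn cj orbT.
  rewrite count_mask_hrungs /left_occupancy /= (gtn_eqF cj) add1n ltnS im subn1 /=.
  by rewrite add0n addn0 addnC.
by case: (all _ _); case: (all _ _); rewrite ?mulr0 ?mul0r.
Qed.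

Lemma word_sumS c t t' w S : size S = m ->
  word_sum m c [:: t, t' & w] S =
  \sum_(Y <- bitseqs m) transfer t S Y * word_sum m c.+1 (t' :: w) Y.
Proof.
move=> HS; rewrite /word_sum [word_edges _ _ _]/= -/(word_edges m c.+1 (t' :: w)) subsum_cat.
transitivity (subsum (column_edges m c t) (fun lv => \sum_(Y <- bitseqs m)
    vcover_weight 1 c (occupancy S Y) lv * word_sum m c.+1 (t' :: w) Y)).
  apply: eq_in_subsum => lv sub_lv.
  rewrite subsum_cat subsumE size_map size_iota !big_seq; apply: eq_bigr => Y.
  rewrite mem_bitseqs => /eqP HY; rewrite -subsumMl.
  by apply: eq_in_subsum => lr sub_lr; apply: cover_weight_split.
rewrite subsum_sum !big_seq; apply: eq_bigr => Y; rewrite mem_bitseqs => /eqP HY.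
by rewrite subsumMr subsum_column_edges.
Qed.

Lemma word_sum1 c t S : size S = m -> word_sum m c [:: t] S = transfer t S (nseq m false).
Proof.
move=> HS; rewrite /word_sum /= cats0 -(subsum_column_edges c t HS (size_nseq m false)).
apply: eq_subsum => lv.
rewrite /cover_weight /vcover_weight /= cats0 size_occupancy ?HS ?size_nseq //.
rewrite (iotaDl 1 0) !all_map; congr (if _ then _ else _); apply: eq_in_all => j.
rewrite mem_iota /left_occupancy /= eqxx nth_occupancy ?HS ?size_nseq // nth_nseq if_same.
by rewrite add0n addn0.
Qed.

Lemma word_sum_transfer c w S : (0 < size w)%N -> size S = m ->
  word_sum m c w S = transfer_prod m w S.
Proof.
elim: w c S => // t [|t' w] IH c S _ HS.
  rewrite word_sum1 //= (big_bitseqs_pick _ (Y0 := nseq m false)) ?size_nseq ?eqxx ?mulr1 //.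
  by move=> Y _ /negbTE ->; rewrite mulr0.
rewrite word_sumS // [RHS]/= !big_seq; apply: eq_bigr => Y; rewrite mem_bitseqs => /eqP HY.
by rewrite IH.
Qed.

End WordSubgraphs.

(** * Grid graphs *)

Definition encodes (G : sgraph) m (w : seq column) :=
  [/\ nrows G = m, ncols G = size w, (0 < size w)%N & perm_eq (edges G) (word_edges m 1 w)].

Lemma mem_grid_vertices G v :
  (v \in grid_vertices G) = (1 <= v.1 <= nrows G)%N && (1 <= v.2 <= ncols G)%N.
Proof.
case: v => i j; apply/allpairsP/andP => [[[i' j'] /= [+ + [-> ->]]]|[Hi Hj]].
  by rewrite !mem_iota => Hi Hj; split; lia.
by exists (i, j); rewrite /= !mem_iota; split => //; lia.
Qed.

Lemma Msum_encodes G m w : encodes G m w -> Msum G = transfer_prod m w (nseq m false).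
Proof.
case=> Hm HN Hw Hp.
rewrite Msum_subsum (perm_subsum (perm_cover_weight _ _) Hp).
rewrite -(word_sum_transfer 1) ?size_nseq //; apply: eq_subsum => l.
rewrite /cover_weight (@eq_all_r _ _ (word_vertices m 1 w)); last first.
  by move=> v; rewrite mem_grid_vertices mem_word_vertices Hm HN add1n ltnS.
by under [in RHS]eq_all do rewrite /left_occupancy nth_nseq if_same andbF.
Qed.

Lemma map_shift_word_edges d m w c :
  map (shift_edge d) (word_edges m c w) = word_edges m (c + d) w.
Proof.
elim: w c => //= t w IH c; rewrite !map_cat IH addSn; congr (_ ++ _ ++ _).
- by case: t => //=; rewrite /vpath -map_comp.
- case: w {IH} => // _ _; rewrite /hrungs -map_comp.
  by apply: eq_map => i; rewrite /shift_edge /= addSn.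
Qed.

Lemma perm_word_edges_cat m w1 w2 c : (0 < size w1)%N -> (0 < size w2)%N ->
  perm_eq (word_edges m c (w1 ++ w2))
    (word_edges m c w1 ++ word_edges m (c + size w1) w2 ++ hrungs (c + size w1).-1 1 m).
Proof.
elim: w1 c => // t [|t' w1] IH c _ w2_gt0.
  by rewrite /= cats0 addn1; case: w2 {IH} w2_gt0 => // t2 w2 _; rewrite perm_cat2l perm_catC.
have word_edges2 c' t0 t1 w : word_edges m c' [:: t0, t1 & w] =
    column_edges m c' t0 ++ hrungs c' 1 m ++ word_edges m c'.+1 (t1 :: w) by [].
rewrite cat_cons (word_edges2 c t t' w1) (word_edges2 c t t').
rewrite -(catA (column_edges m c t)) -(catA (hrungs c 1 m)) 2!perm_cat2l.
have -> : (c + size [:: t, t' & w1] = c.+1 + size (t' :: w1))%N by rewrite addSnnS.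
exact: IH.
Qed.

Lemma encodes_adjoin G1 G2 m w1 w2 :
  encodes G1 m w1 -> encodes G2 m w2 -> encodes (adjoin G1 G2) m (w1 ++ w2).
Proof.
case=> Hm1 HN1 Hw1 Hp1 [_ HN2 Hw2 Hp2]; split => //=.
- by rewrite size_cat HN1 HN2.
- by rewrite size_cat addn_gt0 Hw1.
rewrite perm_sym (permPl (perm_word_edges_cat m 1 Hw1 Hw2)) perm_sym /= Hm1 HN1.
apply: perm_cat => //; apply: perm_cat; last by rewrite add0n.
by rewrite -map_shift_word_edges perm_map.
Qed.

Lemma allpairs_flatten (S T R : Type) (f : S -> T -> R) s t :
  [seq f x y | x <- s, y <- t] = flatten [seq [seq f x y | y <- t] | x <- s].
Proof. by elim: s => //= x s IH; rewrite allpairs_cons IH. Qed.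

Lemma perm_allpairs_swap (S T : Type) (R : eqType) (f : S -> T -> R) s t :
  perm_eq [seq f x y | x <- s, y <- t] [seq f x y | y <- t, x <- s].
Proof.
elim: s => [|x s IH]; first by elim: t => //= y t IHt; rewrite allpairs_cons.
have /permPl swap_x := perm_allpairs_consr (fun y x' => f x' y) t (fun=> x) (fun=> s).
rewrite allpairs_cons perm_sym; apply: perm_trans swap_x _.
by rewrite perm_sym perm_cat2l.
Qed.

Fixpoint word_vedges m c (w : seq column) : seq sedge :=
  if w is t :: w' then column_edges m c t ++ word_vedges m c.+1 w' else [::].

Definition word_hedges m c n : seq sedge := flatten [seq hrungs j 1 m | j <- iota c n.-1].

Lemma perm_word_edges_split m w c :
  perm_eq (word_edges m c w) (word_vedges m c w ++ word_hedges m c (size w)).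
Proof.
elim: w c => // t [|t' w] IH c; first by rewrite /word_hedges /= !cats0.
rewrite (_ : word_hedges m c _ = hrungs c 1 m ++ word_hedges m c.+1 (size (t' :: w))) //.
rewrite (_ : word_edges m c _ =
  column_edges m c t ++ hrungs c 1 m ++ word_edges m c.+1 (t' :: w)) //.
rewrite (_ : word_vedges m c _ = column_edges m c t ++ word_vedges m c.+1 (t' :: w)) //.
by rewrite -catA perm_cat2l perm_sym perm_catCA perm_cat2l perm_sym.
Qed.

Lemma word_vedges_cat m w1 w2 c :
  word_vedges m c (w1 ++ w2) = word_vedges m c w1 ++ word_vedges m (c + size w1) w2.
Proof.
elim: w1 c => [|t w1 IH] c /=; first by rewrite addn0.
by rewrite IH catA addSnnS.
Qed.

Lemma word_vedges_nseq m n t c :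
  word_vedges m c (nseq n t) = flatten [seq column_edges m j t | j <- iota c n].
Proof. by elim: n c => //= n IH c; rewrite IH. Qed.

Lemma perm_hedges m N : perm_eq (hedges m N) (word_hedges m 1 N).
Proof. by rewrite /word_hedges -allpairs_flatten perm_allpairs_swap. Qed.

Lemma perm_vedges m cols s :
  perm_eq (vedges m cols s) (flatten [seq vpath 1 m j s | j <- cols]).
Proof. by rewrite /vedges (permPl (perm_allpairs_swap _ _ _)) allpairs_flatten. Qed.

Definition grid_word (n : int) : seq column :=
  if 0 < n then nseq `|n| Pos else Bare :: nseq `|n| Neg ++ [:: Bare].

Lemma encodes_grid m n : encodes (gridG m n) m (grid_word n).
Proof.
rewrite /gridG /grid_word; case: ifP => n_gt0; split => //.
- by rewrite size_nseq.
- by rewrite size_nseq absz_gt0 lt0r_neq0.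
- rewrite (permPr (perm_word_edges_split m _ 1)) perm_catC size_nseq word_vedges_nseq.
  by rewrite perm_cat ?perm_vedges ?perm_hedges.
- by rewrite /= size_cat size_nseq addn1 add2n.
rewrite (permPr (perm_word_edges_split m _ 1)) perm_catC [size _]/= size_cat size_nseq.
rewrite [word_vedges _ _ _]/= word_vedges_cat word_vedges_nseq /= cats0 addn1 add2n.
by rewrite perm_cat ?perm_vedges ?perm_hedges.
Qed.

Lemma grid_word_pos n : (0 < n)%N -> grid_word n%:Z = nseq n Pos.
Proof. by move=> n_gt0; rewrite /grid_word ltz_nat n_gt0. Qed.

Lemma grid_word_neg n : grid_word (- n%:Z) = Bare :: nseq n Neg ++ [:: Bare].
Proof. by rewrite /grid_word oppr_gt0 ltNge abszN absz_nat. Qed.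

Lemma Msum_adjoin_grid m x y :
  Msum (adjoin (gridG m x) (gridG m y)) =
  transfer_prod m (grid_word x ++ grid_word y) (nseq m false).
Proof. exact/Msum_encodes/encodes_adjoin/encodes_grid/encodes_grid. Qed.

Unset Implicit Arguments.
Theorem mainTheorem4 (m : nat) (hm : (1 <= m)%N) :
  (forall a b : nat, (1 <= a)%N -> (1 <= b)%N ->
     Msum (adjoin (gridG m a%:Z) (gridG m (- b%:Z)))
     = Msum (adjoin (gridG m (a%:Z - 1)) (gridG m (- (b%:Z - 1))))) /\
  (forall a b : nat,
     Msum (adjoin (gridG m (- a%:Z)) (gridG m (- b%:Z)))
     = Msum (gridG m (- (a%:Z + b%:Z)))).
Proof.
have zero_size : size (nseq m false) = m by rewrite size_nseq.
have predK k : k.+1%:Z - 1 = k%:Z by rewrite -addn1 PoszD addrK.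
split => [[|a] [|b] // _ _ | a b].
  rewrite !Msum_adjoin_grid !predK !grid_word_neg grid_word_pos // -(addn1 a) nseqD -catA.
  case: a => [|a].
    by rewrite [LHS](transfer_prod_Pos_Bare_Neg _ zero_size) (transfer_prod_Bare_Bare _ zero_size).
  rewrite grid_word_pos //; apply: transfer_prod_catl => // S HS.
  exact: transfer_prod_Pos_Bare_Neg.
rewrite Msum_adjoin_grid (Msum_encodes (encodes_grid _ _)) -PoszD !grid_word_neg.
rewrite -cat_cons -catA nseqD -catA; apply: (transfer_prod_catl (Bare :: nseq a Neg)) => // S HS.
exact: transfer_prod_Bare_Bare.
Qed.
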